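(* The identity map $\mathrm{id}_2:M_2\to M_2$ generates an exposed ray of the convex cone $\mathbb P_1[M_2,M_2]$ of all positive linear maps from $M_2$ into $M_2$.
   Context: $M_2$ denotes the algebra of $2\times 2$ complex matrices. A linear map $M_2\to M_2$ is positive if it sends positive semidefinite matrices to positive semidefinite matrices; $\mathbb P_1[M_2,M_2]$ is the convex cone of such maps, regarded in the real vector space of Hermiticity-preserving linear maps $M_2\to M_2$. A nonzero $\phi$ in the cone generates an exposed ray if there is a real linear functional $f$ on that space with $f\ge0$ on the cone and $\{\psi\in\mathbb P_1[M_2,M_2]: f(\psi)=0\}=\{\lambda\phi:\lambda\ge0\}$. *)

From HB Require Import structures.
From mathcomp Require Import all_boot all_order all_algebra.
From mathcomp Require Import reals complex.
Set Implicit Arguments. Unset Strict Implicit. Unset Printing Implicit Defensive.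
Import Order.TTheory GRing.Theory Num.Theory.
Local Open Scope ring_scope.
Local Open Scope complex_scope.

Section M2.
Variable R : realType.

Definition M2 := 'M[R[i]]_2.

Definition adjmx (A : M2) : M2 := map_mx Num.conj (A^T).

Definition hermitian (A : M2) : Prop := adjmx A = A.

Definition psd (A : M2) : Prop :=
  hermitian A /\
  forall v : 'cV[R[i]]_2, 0 <= ((map_mx Num.conj (v^T)) *m A *m v) 0 0.

Definition clinear_map (phi : M2 -> M2) : Prop :=
  forall (a : R[i]) (A B : M2), phi (a *: A + B) = a *: phi A + phi B.

Definition herm_pres (phi : M2 -> M2) : Prop :=
  clinear_map phi /\ forall A : M2, phi (adjmx A) = adjmx (phi A).

Definition positive_map (phi : M2 -> M2) : Prop :=
  clinear_map phi /\ forall A : M2, psd A -> psd (phi A).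

(* real-linear functional on the real vector space of Hermiticity-preserving
   linear maps (its values outside that space are irrelevant) *)
Definition real_lin_functional (f : (M2 -> M2) -> R) : Prop :=
  forall (r : R) (phi psi : M2 -> M2), herm_pres phi -> herm_pres psi ->
    f (fun A => r%:C *: phi A + psi A) = r * f phi + f psi.

Definition exposed_ray (phi : M2 -> M2) : Prop :=
  positive_map phi /\ (exists A : M2, phi A != 0) /\
  exists f : (M2 -> M2) -> R,
    real_lin_functional f /\
    (forall psi, positive_map psi -> 0 <= f psi) /\
    (forall psi, (positive_map psi /\ f psi = 0) <->
                 (exists l : R, 0 <= l /\ forall A, psi A = l%:C *: phi A)).

End M2.

From Pilot Require Import Defs.
From mathcomp Require Import all_boot all_order all_algebra.
From mathcomp Require Import reals complex ring.
Set Implicit Arguments. Unset Strict Implicit. Unset Printing Implicit Defensive.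
Import Order.TTheory GRing.Theory Num.Theory.
Local Open Scope ring_scope.
Local Open Scope sesquilinear_scope.

(* For u in C^2 let u' := perp u, orthogonal to u.  Summing <u', psi(u u^* ) u'>
   over the six vectors u of three mutually unbiased bases of C^2 gives a real
   functional f that is nonnegative on positive maps and vanishes on id.  If f
   vanishes on a positive map psi, every PSD matrix psi(u u^* ) kills u', hence
   is c_u u u^*.  Each of the three bases resolves the identity, so psi(1) is
   computed in three ways, which forces all c_u to be equal; as the six
   projectors span M_2, psi = c id, and c >= 0. *)

Section PositiveMapsM2.
Variable R : realType.
Local Notation C := R[i].
Local Notation M := 'M[C]_2.
Implicit Types (u v w : 'cV[C]_2) (x y z : C).

Lemma trmxC_mul m n p (A : 'M[C]_(m, n)) (B : 'M[C]_(n, p)) :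
  (A *m B) ^t* = B ^t* *m A ^t*.
Proof. by rewrite trmx_mul map_mxM. Qed.

Lemma trmxCD m n (A B : 'M[C]_(m, n)) : (A + B) ^t* = A ^t* + B ^t*.
Proof. by rewrite linearD /= map_mxD. Qed.

Lemma trmxCZ m n (a : C) (A : 'M[C]_(m, n)) : (a *: A) ^t* = a^* *: A ^t*.
Proof. by rewrite linearZ /= map_mxZ. Qed.

Lemma hermitianE (A : M) : Defs.hermitian A <-> A ^t* = A.
Proof. by []. Qed.

Definition qform (A : M) v w : C := (v ^t* *m A *m w) 0 0.

Lemma qformD (A B : M) v w : qform (A + B) v w = qform A v w + qform B v w.
Proof. by rewrite /qform mulmxDr mulmxDl mxE. Qed.

Lemma qformZ a (A : M) v w : qform (a *: A) v w = a * qform A v w.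
Proof. by rewrite /qform -scalemxAr -scalemxAl mxE. Qed.

Lemma qform_antilinear_l s (A : M) v v' w :
  qform A (s *: v + v') w = s^* * qform A v w + qform A v' w.
Proof. by rewrite /qform trmxCD trmxCZ !mulmxDl -!scalemxAl !mxE. Qed.

Lemma qform_linear_r s (A : M) v w w' :
  qform A v (s *: w + w') = s * qform A v w + qform A v w'.
Proof. by rewrite /qform mulmxDr -scalemxAr !mxE. Qed.

Lemma qform_conj (A : M) v w : A ^t* = A -> (qform A v w)^* = qform A w v.
Proof.
move=> hA; have -> : (qform A v w)^* = ((v ^t* *m A *m w) ^t*) 0 0.
  by rewrite /qform !mxE.
by rewrite !trmxC_mul trmxCK hA mulmxA.
Qed.

Lemma qform_mul0 (A : M) v w : A *m w = 0 -> qform A v w = 0.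
Proof. by move=> Aw0; rewrite /qform -mulmxA Aw0 mulmx0 mxE. Qed.

Lemma psd_qform_ge0 (A : M) v : psd A -> 0 <= qform A v v.
Proof. by case=> _; apply. Qed.

Lemma psdZ a (A : M) : 0 <= a -> psd A -> psd (a *: A).
Proof.
move=> a_ge0 [/hermitianE hA qA]; split.
  by rewrite hermitianE trmxCZ hA conj_Creal ?ger0_real.
by move=> v; change (0 <= qform (a *: A) v v); rewrite qformZ mulr_ge0 //; apply: qA.
Qed.

Lemma psd_qform_cross_eq0 (A : M) w : psd A -> qform A w w = 0 ->
  forall v, qform A v w = 0.
Proof.
move=> psdA ww0 v; have hA : A ^t* = A := psdA.1.
set b := qform A v w; set q := qform A v v.
have q_ge0 : 0 <= q := psd_qform_ge0 v psdA.
have q1_gt0 : 0 < q + 1 by rewrite ltr_wpDl.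
have q_real : q^* = q by rewrite qform_conj.
(* the value of <s v + w, A (s v + w)> at this s is -|b|^2 (q + 2) / (q + 1)^2 *)
pose s := - b / (q + 1).
have := psd_qform_ge0 (s *: v + w) psdA.
rewrite qform_antilinear_l !qform_linear_r ww0 -/b -/q -(qform_conj _ _ hA) -/b.
have -> : s^* * (s * q + b) + (s * b^* + 0) =
          - (b * b^* * (q + 2%:R) / (q + 1) ^+ 2).
  rewrite /s rmorphM rmorphN /= fmorphV rmorphD /= q_real conjC1.
  by field; rewrite gt_eqF.
rewrite oppr_ge0 pmulr_lle0 ?invr_gt0 ?exprn_gt0 // pmulr_lle0 ?ltr_wpDl //.
by move=> bb_le0; apply/eqP; rewrite -mul_conjC_eq0 eq_le bb_le0 mul_conjC_ge0.
Qed.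

Lemma psd_mulmx_eq0 (A : M) w : psd A -> qform A w w = 0 -> A *m w = 0.
Proof.
move=> psdA ww0; apply/colP => i; rewrite [RHS]mxE.
have := psd_qform_cross_eq0 psdA ww0 (delta_mx i 0).
by rewrite /qform trmx_delta map_delta_mx -mulmxA -rowE mxE.
Qed.

Lemma ord2E (i : 'I_2) : i = 0 \/ i = 1.
Proof. by case: i => [[|[|//]] ?]; [left | right]; apply: val_inj. Qed.

Lemma sum_ord2 (F : 'I_2 -> C) : \sum_i F i = F 0 + F 1.
Proof. by rewrite big_ord_recl big_ord1; congr (_ + F _); apply: val_inj. Qed.

Lemma qformE (A : M) v w : qform A v w =
  (v 0 0)^* * (A 0 0 * w 0 0 + A 0 1 * w 1 0) + (v 1 0)^* * (A 1 0 * w 0 0 + A 1 1 * w 1 0).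
Proof. by rewrite /qform mxE sum_ord2 !mxE !sum_ord2 !mxE; ring. Qed.

Definition col2 x y : 'cV[C]_2 := \col_i (if i == 0 then x else y).
Definition perp u : 'cV[C]_2 := col2 (- (u 1 0)^*) ((u 0 0)^*).
Definition rank1 u : M := u *m u ^t*.
Definition sqnorm u : C := (u ^t* *m u) 0 0.

Lemma col2_0 x y : col2 x y 0 0 = x. Proof. by rewrite mxE. Qed.
Lemma col2_1 x y : col2 x y 1 0 = y. Proof. by rewrite mxE. Qed.

Lemma col2_eq0 x y : (col2 x y == 0) = (x == 0) && (y == 0).
Proof.
apply/eqP/andP => [u0 | [/eqP x0 /eqP y0]].
  by split; apply/eqP; [rewrite -(col2_0 x y) | rewrite -(col2_1 x y)]; rewrite u0 mxE.
by apply/colP => i; rewrite !mxE x0 y0; case: ifP.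
Qed.

Lemma sqnormE u : sqnorm u = u 0 0 * (u 0 0)^* + u 1 0 * (u 1 0)^*.
Proof. by rewrite /sqnorm mxE sum_ord2 !mxE !(mulrC (_ ^*)). Qed.

Lemma sqnorm_gt0 u : u != 0 -> 0 < sqnorm u.
Proof.
move=> u_neq0; have [ge0_0 ge0_1] := (mul_conjC_ge0 (u 0 0), mul_conjC_ge0 (u 1 0)).
rewrite lt_def sqnormE addr_ge0 // andbT; apply: contra u_neq0.
rewrite paddr_eq0 // !mul_conjC_eq0 => /andP[/eqP u0 /eqP u1].
by apply/eqP/colP => i; rewrite mxE; case: (ord2E i) => ->.
Qed.

Lemma rank1E u i j : rank1 u i j = u i 0 * (u j 0)^*.
Proof. by rewrite !mxE big_ord1 !mxE. Qed.

Lemma psd_rank1 u : psd (rank1 u).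
Proof.
split; first by rewrite hermitianE /rank1 trmxC_mul trmxCK.
move=> v; change (0 <= qform (rank1 u) v v).
have -> : qform (rank1 u) v v = (v ^t* *m u) 0 0 * ((v ^t* *m u) 0 0)^*.
  rewrite /qform /rank1 mulmxA -(mulmxA _ (u ^t*)).
  rewrite -[u ^t* *m v]trmxCK trmxC_mul trmxCK.
  by rewrite [in LHS]mxE big_ord1 !mxE.
exact: mul_conjC_ge0.
Qed.

Lemma rank1_perp u : rank1 u *m perp u = 0.
Proof. by apply/colP => i; rewrite !mxE sum_ord2 !rank1E !mxE /=; ring. Qed.

Lemma rank1_add_perp u : rank1 u + rank1 (perp u) = (sqnorm u)%:M.
Proof.
apply/matrixP => i j; rewrite [LHS]mxE !rank1E [RHS]mxE sqnormE !mxE.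
by case: (ord2E i) => ->; case: (ord2E j) => -> /=; rewrite ?rmorphN /= ?conjCK; ring.
Qed.

Lemma hermitian_perp_rank1 (A : M) u : A ^t* = A -> A *m perp u = 0 -> u != 0 ->
  A = (qform A u u / sqnorm u ^+ 2) *: rank1 u.
Proof.
move=> hA A_perp0 /sqnorm_gt0 n_gt0; set n := sqnorm u in n_gt0 *.
have n_real : n^* = n by rewrite conj_Creal ?gtr0_real.
have A_rank1 : A *m rank1 u = n *: A.
  rewrite -[RHS]mul_mx_scalar -rank1_add_perp mulmxDr /rank1.
  by rewrite [A *m (perp u *m _)]mulmxA A_perp0 mul0mx addr0.
have rank1_A : rank1 u *m A = n *: A.
  have rank1_herm : rank1 u ^t* = rank1 u := (psd_rank1 u).1.
  by rewrite -[LHS]trmxCK trmxC_mul hA rank1_herm A_rank1 trmxCZ hA n_real.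
have sandwich : rank1 u *m A *m rank1 u = qform A u u *: rank1 u.
  have -> : rank1 u *m A *m rank1 u = u *m (u ^t* *m A *m u) *m u ^t*.
    by rewrite /rank1 !mulmxA.
  by rewrite [u ^t* *m A *m u]mx11_scalar mul_mx_scalar -scalemxAl.
rewrite mulrC -scalerA -sandwich -mulmxA A_rank1 -scalemxAr rank1_A.
by rewrite [n *: (n *: A)]scalerA -expr2 scalerK // expf_neq0 // gt_eqF.
Qed.

(* Three mutually unbiased bases of C^2, each u followed by a multiple of perp u. *)
Definition probes : seq 'cV[C]_2 :=
  [:: col2 1 0; col2 0 1; col2 1 1; col2 1 (-1); col2 1 'i; col2 1 (-'i)].

Lemma probesP (P : 'cV[C]_2 -> Prop) :
  P (col2 1 0) -> P (col2 0 1) -> P (col2 1 1) -> P (col2 1 (-1)) ->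
  P (col2 1 'i) -> P (col2 1 (-'i)) -> forall u, u \in probes -> P u.
Proof.
move=> ? ? ? ? ? ? u; rewrite !inE.
by do ![case/orP=> [/eqP->//|]] => /eqP->.
Qed.

Lemma probes_neq0 : forall u, u \in probes -> u != 0.
Proof. by apply: probesP; rewrite col2_eq0 ?oner_eq0 ?andbF. Qed.

Lemma probes_resolution (A : M) :
  \sum_(u <- probes) (qform A u u / sqnorm u ^+ 2) *: rank1 u = A + \tr A *: 1%:M.
Proof.
apply/matrixP => i j; rewrite summxE.
have -> : (A + \tr A *: 1%:M) i j = A i j + (A 0 0 + A 1 1) * (i == j)%:R.
  by rewrite !mxE /mxtrace sum_ord2.
under eq_bigr => u _ do rewrite mxE rank1E qformE sqnormE.
rewrite /probes !big_cons big_nil addr0.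
case: (ord2E i) => ->; case: (ord2E j) => ->.
all: rewrite !col2_0 !col2_1 /= ?rmorphN /= ?conjC0 ?conjC1 ?conjCi ?opprK.
all: field: (@mulCii C); by rewrite mulNr mulCii opprK -[1 + 1]/(2%:R) pnatr_eq0.
Qed.

Lemma rank1_col2_basis : rank1 (col2 1 0) + rank1 (col2 0 1) = 1%:M.
Proof.
apply/matrixP => i j; rewrite !mxE !big_ord1 !mxE.
by case: (ord2E i) => ->; case: (ord2E j) => -> /=; rewrite ?conjC0 ?conjC1; ring.
Qed.

Lemma rank1_col2_pair z : z * z^* = 1 ->
  rank1 (col2 1 z) + rank1 (col2 1 (-z)) = 2%:R *: 1%:M.
Proof.
move=> zz1; apply/matrixP => i j; rewrite !mxE !big_ord1 !mxE.
case: (ord2E i) => ->; case: (ord2E j) => -> /=; rewrite ?rmorphN /= ?conjC1.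
all: ring: zz1.
Qed.

Lemma pair_coef_eq z (a b d0 d1 : C) : z != 0 -> z * z^* = 1 ->
  a *: rank1 (col2 1 z) + b *: rank1 (col2 1 (-z)) =
    2%:R *: (d0 *: rank1 (col2 1 0) + d1 *: rank1 (col2 0 1)) ->
  [/\ a = d0, b = d0 & d1 = d0].
Proof.
move=> z_neq0 zz1 eq_ab; have entry i j := congr1 (fun B : M => B i j) eq_ab.
move: (entry 0 1) (entry 0 0) (entry 1 1); rewrite !mxE !big_ord1 !mxE /=.
rewrite ?rmorphN /= mulrNN zz1 ?conjC0 ?conjC1 !(mul1r, mulr1, mul0r, mulr0, addr0, mulrN).
move=> /eqP; rewrite -mulrBl mulf_eq0 conjC_eq0 (negbTE z_neq0) orbF subr_eq0 => /eqP <-.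
have two_neq0 : (2%:R : C) != 0 by rewrite pnatr_eq0.
rewrite add0r -mulr2n -[a *+ 2]mulr_natl.
by move=> /(mulfI two_neq0) a_d0 /(mulfI two_neq0) a_d1; rewrite -a_d0 -a_d1.
Qed.

Section LinearMap.
Variable psi : M -> M.
Hypothesis psi_lin : clinear_map psi.

Lemma clinear_mapD A B : psi (A + B) = psi A + psi B.
Proof. by have := psi_lin 1 A B; rewrite !scale1r. Qed.

Lemma clinear_map0 : psi 0 = 0.
Proof. by have := clinear_mapD 0 0; rewrite addr0 -{1}[psi 0]addr0 => /addrI /esym. Qed.

Lemma clinear_mapZ a A : psi (a *: A) = a *: psi A.
Proof. by have := psi_lin a A 0; rewrite clinear_map0 !addr0. Qed.

Lemma clinear_map_sum (I : Type) (s : seq I) (F : I -> M) :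
  psi (\sum_(i <- s) F i) = \sum_(i <- s) psi (F i).
Proof. exact: (big_morph psi clinear_mapD clinear_map0). Qed.

Lemma probes_coef_eq (c : 'cV[C]_2 -> C) :
  (forall u, u \in probes -> psi (rank1 u) = c u *: rank1 u) ->
  forall u, u \in probes -> c u = c (col2 1 0).
Proof.
move=> psi_probes; set d0 := c (col2 1 0); set d1 := c (col2 0 1).
have psi1 : psi 1%:M = d0 *: rank1 (col2 1 0) + d1 *: rank1 (col2 0 1).
  by rewrite -rank1_col2_basis clinear_mapD !psi_probes // !inE eqxx ?orbT.
have pair z : z != 0 -> z * z^* = 1 -> col2 1 z \in probes -> col2 1 (-z) \in probes ->
    c (col2 1 z) = d0 /\ c (col2 1 (-z)) = d0 /\ d1 = d0.
  move=> z_neq0 zz1 z_in Nz_in.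
  have := congr1 psi (rank1_col2_pair zz1).
  rewrite clinear_mapD clinear_mapZ psi1 !psi_probes //.
  by case/(pair_coef_eq z_neq0 zz1).
have [c3 [c4 d1_d0]] : c (col2 1 1) = d0 /\ c (col2 1 (-1)) = d0 /\ d1 = d0.
  by apply: pair; rewrite ?oner_neq0 ?conjC1 ?mulr1 // !inE eqxx ?orbT.
have [c5 [c6 _]] : c (col2 1 'i) = d0 /\ c (col2 1 (-'i)) = d0 /\ d1 = d0.
  by apply: pair; rewrite ?neq0Ci ?conjCi ?mulrN ?mulCii ?opprK // !inE eqxx ?orbT.
exact: probesP.
Qed.

Lemma scalar_on_probes (c : C) :
  (forall u, u \in probes -> psi (rank1 u) = c *: rank1 u) -> forall A, psi A = c *: A.
Proof.
move=> psi_probes A.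
have psi1 : psi 1%:M = c *: 1%:M.
  by rewrite -rank1_col2_basis clinear_mapD !psi_probes ?scalerDr // !inE eqxx ?orbT.
have := congr1 psi (probes_resolution A).
rewrite clinear_map_sum clinear_mapD clinear_mapZ psi1.
rewrite (eq_big_seq (fun u => c *: ((qform A u u / sqnorm u ^+ 2) *: rank1 u))); last first.
  by move=> u u_in /=; rewrite clinear_mapZ psi_probes // !scalerA mulrC.
rewrite -scaler_sumr probes_resolution scalerDr.
have -> : c *: (\tr A *: 1%:M) = \tr A *: (c *: 1%:M) :> M by rewrite !scalerA mulrC.
by move=> /addIr.
Qed.

End LinearMap.

Local Open Scope complex_scope.

Lemma complex_ge0E z : 0 <= z -> z = (complex.Re z)%:C /\ 0 <= complex.Re z.
Proof. by rewrite lecE; case: z => a b /= /andP[/eqP -> a_ge0]. Qed.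

Lemma Re_realM (r : R) z : complex.Re (r%:C * z) = r * complex.Re z.
Proof. by case: z => a b /=; rewrite mul0r subr0. Qed.

Lemma scalar_map_positive (psi : M -> M) (l : R) :
  (forall A, psi A = l%:C *: A) -> 0 <= l -> positive_map psi.
Proof.
move=> psiE l_ge0; split; first by move=> a A B; rewrite !psiE scalerDr !scalerA mulrC.
by move=> A; rewrite psiE; apply: psdZ; rewrite lecR.
Qed.

(* For positive psi the sum is a nonnegative real; taking [Re] makes the
   functional real-valued on all maps. *)
Definition exposing_functional (psi : M -> M) : R :=
  complex.Re (\sum_(u <- probes) qform (psi (rank1 u)) (perp u) (perp u)).

Lemma exposing_functional_linear : real_lin_functional exposing_functional.
Proof.
move=> r phi psi _ _; rewrite /exposing_functional.
under eq_bigr => u _ do rewrite qformD qformZ.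
by rewrite big_split /= -mulr_sumr raddfD /= Re_realM.
Qed.

Lemma exposing_functional_scalar (psi : M -> M) (l : R) :
  (forall A, psi A = l%:C *: A) -> exposing_functional psi = 0.
Proof.
move=> psiE; rewrite /exposing_functional big1_seq // => u _.
by apply: qform_mul0; rewrite psiE -scalemxAl rank1_perp scaler0.
Qed.

Lemma exposing_sum_ge0 psi : positive_map psi ->
  0 <= \sum_(u <- probes) qform (psi (rank1 u)) (perp u) (perp u).
Proof. by case=> _ pos; apply: sumr_ge0 => u _; apply/psd_qform_ge0/pos/psd_rank1. Qed.

Lemma exposing_functional_ge0 psi : positive_map psi -> 0 <= exposing_functional psi.
Proof. by move/exposing_sum_ge0/complex_ge0E => []. Qed.

Lemma exposing_functional_eq0 psi : positive_map psi -> exposing_functional psi = 0 ->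
  forall u, u \in probes -> psi (rank1 u) *m perp u = 0.
Proof.
move=> psi_pos f0 u u_in; have [_ pos] := psi_pos.
apply: psd_mulmx_eq0; first exact/pos/psd_rank1.
have [+ _] := complex_ge0E (exposing_sum_ge0 psi_pos).
rewrite -/(exposing_functional psi) f0 => /eqP; rewrite psumr_eq0.
  by move=> /allP/(_ u u_in)/eqP.
by move=> v _; apply/psd_qform_ge0/pos/psd_rank1.
Qed.

Lemma exposed_face psi : positive_map psi -> exposing_functional psi = 0 ->
  exists l : R, 0 <= l /\ forall A, psi A = l%:C *: A.
Proof.
move=> psi_pos f0; have [psi_lin pos] := psi_pos.
pose c u := qform (psi (rank1 u)) u u / sqnorm u ^+ 2.
have psi_probes u : u \in probes -> psi (rank1 u) = c u *: rank1 u.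
  move=> u_in; apply: hermitian_perp_rank1 (probes_neq0 u_in).
    exact: (pos _ (psd_rank1 u)).1.
  exact: exposing_functional_eq0.
have e0_in : col2 1 0 \in probes by rewrite inE eqxx.
have psiE : forall A, psi A = c (col2 1 0) *: A.
  apply: (scalar_on_probes psi_lin) => u u_in.
  by rewrite psi_probes // (probes_coef_eq psi_lin psi_probes u_in).
have c_ge0 : 0 <= c (col2 1 0).
  apply: divr_ge0; first exact/psd_qform_ge0/pos/psd_rank1.
  by rewrite exprn_ge0 // ltW // sqnorm_gt0 // probes_neq0.
have [cE l_ge0] := complex_ge0E c_ge0.
by exists (complex.Re (c (col2 1 0))); split => // A; rewrite psiE {1}cE.
Qed.

End PositiveMapsM2.

Theorem proposition3p3 (R : realType) : exposed_ray (@id (M2 R)).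
Proof.
split; first by split.
split; first by exists (1 : 'M[R[i]]_2); rewrite oner_neq0.
exists (@exposing_functional R); split; first exact: exposing_functional_linear.
split; first exact: exposing_functional_ge0.
move=> psi; split => [[psi_pos /(exposed_face psi_pos)] // | [l [l_ge0 psiE]]].
split; first exact: scalar_map_positive psiE l_ge0.
exact: exposing_functional_scalar psiE.
Qed.
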